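(* Let $n\ge 3$, let $r_1,\ldots,r_n$ be indeterminates over $\mathbb{Q}$, and let $f=\prod_{i=1}^n(x-r_i)=x^n+a_{n-1}x^{n-1}+\cdots+a_0$. Let \[f_1(x,y)=\frac{f(y)-f(x)}{y-x},\qquad f_3(x,y)=\frac{f(y)-2f\left(\frac{x+y}{2}\right)+f(x)}{\frac{(y-x)^2}{2}},\] and $F(x)=\operatorname{res}(f_1,f_3,y)$. Then for any $k,j\in\{2,\ldots,n\}$ with $k\ne j$, the polynomial $r_1-2r_k+r_j$ divides $F(r_1)$ in $\mathbb{Q}[r_1,\ldots,r_n]$.
   Context: $\operatorname{res}(\cdot,\cdot,y)$ is the Sylvester resultant with respect to $y$; $F(r_1)$ is $F$ with $x$ replaced by $r_1$, viewed as a polynomial in $r_1,\ldots,r_n$. *)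

From HB Require Import structures.
From mathcomp Require Import all_boot all_order all_algebra.
From mathcomp Require Import mpoly.
Set Implicit Arguments. Unset Strict Implicit. Unset Printing Implicit Defensive.
Import Order.TTheory GRing.Theory Num.Theory.
Local Open Scope ring_scope.

(* Base ring Q[r_1,...,r_n]; r_(i+1) is the multivariate variable 'X_i, i : 'I_n. *)
Notation Qr n := {mpoly rat[n]}.

Definition fpoly (n : nat) : {poly Qr n} := \prod_(i < n) ('X - ('X_i)%:P).

(* Bivariate polynomials in x,y over Q[r]: outer variable is y, inner is x,
   i.e. elements of {poly {poly Qr n}} (coefficients in y are polys in x). *)
Definition xvar (n : nat) : {poly {poly Qr n}} := ('X : {poly Qr n})%:P.
Definition yvar (n : nat) : {poly {poly Qr n}} := 'X.

Definition f_y (n : nat) : {poly {poly Qr n}} := (fpoly n) ^:P.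
Definition f_x (n : nat) : {poly {poly Qr n}} := (fpoly n)%:P.
Definition f_mid (n : nat) : {poly {poly Qr n}} :=
  (fpoly n) ^:P \Po (((((2%:R)^-1 : rat)%:MP_[n])%:P)%:P * (xvar n + yvar n)).

Definition f1 (n : nat) : {poly {poly Qr n}} :=
  (f_y n - f_x n) %/ (yvar n - xvar n).

(* f3 = (f(y) - 2 f((x+y)/2) + f(x)) / ((y-x)^2 / 2)
      = 2 (f(y) - 2 f((x+y)/2) + f(x)) / (y-x)^2  (exact division) *)
Definition f3 (n : nat) : {poly {poly Qr n}} :=
  (2%:R * (f_y n - 2%:R * f_mid n + f_x n)) %/ ((yvar n - xvar n) ^+ 2).

Definition Fres (n : nat) : {poly Qr n} := resultant (f1 n) (f3 n).

(* Specialize r_j := 2 r_k - r_1, the reflection of r_1 through r_k.  Then r_1, r_k and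
   y := 2 r_k - r_1 are all roots of f, and r_k is the midpoint of r_1 and y, so y is a
   common root of f_1(r_1, .) and f_3(r_1, .) (y != r_1 lets us divide by y - r_1).  As
   the resultant is a combination u f_1 + v f_3, F(r_1) vanishes under the substitution.
   Finally, P - P(r_j := 2 r_k - r_1) is a multiple of r_1 - 2 r_k + r_j for every
   polynomial P, because the substitution changes each variable by such a multiple. *)

From HB Require Import structures.
From mathcomp Require Import all_boot all_order all_algebra.
From mathcomp Require Import mpoly zify.
Set Implicit Arguments.
Unset Strict Implicit.
Unset Printing Implicit Defensive.

Import Order.TTheory GRing.Theory Num.Theory.
Local Open Scope ring_scope.

Definition multiple (R : comNzRingType) (d a : R) := exists q, a = d * q.

Section Multiples.
Variables (R : comNzRingType) (d : R).

Lemma multiple0 : multiple d 0.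
Proof. by exists 0; rewrite mulr0. Qed.

Lemma multipleD a b : multiple d a -> multiple d b -> multiple d (a + b).
Proof. by move=> [qa ->] [qb ->]; exists (qa + qb); rewrite mulrDr. Qed.

Lemma multipleMl a b : multiple d b -> multiple d (a * b).
Proof. by move=> [q ->]; exists (a * q); rewrite mulrCA. Qed.

Lemma multiple_subM a1 b1 a2 b2 :
  multiple d (a1 - b1) -> multiple d (a2 - b2) -> multiple d (a1 * a2 - b1 * b2).
Proof.
move=> h1 h2; have -> : a1 * a2 - b1 * b2 = a2 * (a1 - b1) + b1 * (a2 - b2).
  by rewrite !mulrBr [a2 * a1]mulrC [a2 * b1]mulrC addrA subrK.
by apply: multipleD; apply: multipleMl.
Qed.

Lemma multiple_subX a b e : multiple d (a - b) -> multiple d (a ^+ e - b ^+ e).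
Proof. by rewrite subrXX mulrC; apply: multipleMl. Qed.

End Multiples.

Section SubstitutionCongruence.
Variables (R : comNzRingType) (n : nat) (t : n.-tuple {mpoly R[n]}) (d : {mpoly R[n]}).
Hypothesis multiple_var_sub : forall i, multiple d ('X_i - tnth t i).

Lemma multiple_sub_comp_mpolyX m : multiple d ('X_[m] - ('X_[m] \mPo t)).
Proof.
rewrite comp_mpolyX mpolyXE_id.
apply: (big_ind2 (fun a b => multiple d (a - b))) => [|a1 b1 a2 b2|i _].
- by rewrite subrr; apply: multiple0.
- exact: multiple_subM.
- exact: multiple_subX.
Qed.

Lemma multiple_sub_comp_mpoly P : multiple d (P - (P \mPo t)).
Proof.
elim/mpolyind: P => [|c m P _ _ IH]; first by rewrite comp_mpoly0 subrr; apply: multiple0.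
rewrite comp_mpolyD comp_mpolyZ opprD addrACA -scalerBr -mul_mpolyC.
by apply: multipleD => //; apply: multipleMl; apply: multiple_sub_comp_mpolyX.
Qed.

End SubstitutionCongruence.

Lemma double_root_factor (R : comNzRingType) (p : {poly R}) (a : R) :
  p.[a] = 0 -> (p^`()).[a] = 0 -> exists q, p = q * ('X - a%:P) ^+ 2.
Proof.
move=> /eqP/factor_theorem [q ->].
rewrite derivM derivXsubC mulr1 hornerD hornerM hornerXsubC subrr mulr0 add0r.
by move=> /eqP/factor_theorem [q2 ->]; exists q2; rewrite -mulrA -expr2.
Qed.

(* With [c = 1/2], [divdiff1 p] and [divdiff3 c p] are the paper's f_1 and f_3 for
   the polynomial p (passing [c] avoids requiring 2 to be invertible in [R]); [f1 n]
   and [f3 n] are the instances [p = fpoly n]. *)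
Section DividedDifferences.
Variable R : idomainType.
Implicit Types p : {poly R}.

Definition divdiff1 p : {poly {poly R}} := (p^:P - p%:P) %/ ('X - 'X%:P).

Definition midpoint_value (c : R) p : {poly {poly R}} :=
  p^:P \Po (c%:P%:P * ('X%:P + 'X)).

Definition divdiff3 (c : R) p : {poly {poly R}} :=
  (2%:R * (p^:P - 2%:R * midpoint_value c p + p%:P)) %/ (('X - 'X%:P) ^+ 2).

Lemma divpK_monic (P D : {poly {poly R}}) :
  D \is monic -> (exists Q, P = Q * D) -> P = (P %/ D) * D.
Proof. by move=> monD [Q ->]; rewrite Pdiv.IdomainMonic.mulpK. Qed.

Lemma divdiff1E p : p^:P - p%:P = divdiff1 p * ('X - 'X%:P).
Proof.
apply: divpK_monic; first exact: monicXsubC.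
by apply/factor_theorem; rewrite rootE hornerD hornerN hornerC [_.['X]]comp_polyXr subrr.
Qed.

Lemma size_divdiff1 p : (1 < size p)%N -> size (divdiff1 p) = (size p).-1.
Proof.
move=> p_gt1; have := congr1 (fun P : {poly {poly R}} => size P) (divdiff1E p).
rewrite size_polyDl ?size_map_polyC;
  last by rewrite size_polyN (leq_ltn_trans (size_polyC_leq1 _)).
have [->|nz] := eqVneq (divdiff1 p) 0.
  by rewrite mul0r size_poly0 => sz0; rewrite sz0 in p_gt1.
by rewrite size_Mmonic ?monicXsubC // size_XsubC addn2 => ->.
Qed.

Variable c : R.
Hypothesis c_half : c * 2%:R = 1.

Lemma midpoint_arg_diag : (c%:P%:P * ('X%:P + 'X)).['X] = 'X :> {poly R}.
Proof.
by rewrite hornerM hornerC hornerD hornerC hornerX -mulr2n -mulr_natr mulrCA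
  -polyC_natr -polyCM c_half mulr1.
Qed.

(* At [y = x] the midpoint argument equals [x] and has y-derivative [c], so the numerator
   and its y-derivative both vanish there. *)
Lemma divdiff3E p :
  2%:R * (p^:P - 2%:R * midpoint_value c p + p%:P) = divdiff3 c p * ('X - 'X%:P) ^+ 2.
Proof.
apply: divpK_monic; first exact/monic_exp/monicXsubC.
apply: double_root_factor.
  rewrite !mulr_natl !(hornerMn, hornerD, hornerN, hornerC) horner_comp midpoint_arg_diag.
  by rewrite [_.['X]]comp_polyXr addrC addrA -mulr2n subrr mul0rn.
rewrite !mulr_natl !(derivMn, derivD, derivN, derivC) deriv_comp deriv_map.
rewrite derivM derivC derivD derivC derivX mul0r !add0r mulr1 addr0.
rewrite !(hornerMn, hornerD, hornerN, hornerM, hornerC) horner_comp midpoint_arg_diag.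
by rewrite [_.['X]]comp_polyXr -mulrnAr -polyCMn -[c *+ 2]mulr_natr c_half mulr1 subrr mul0rn.
Qed.

Let c_neq0 : c != 0.
Proof. by apply: contra_eq_neq c_half => ->; rewrite mul0r eq_sym oner_neq0. Qed.

Let midpoint_arg_size : size (c%:P%:P * ('X%:P + 'X) : {poly {poly R}}) = 2.
Proof. by rewrite mul_polyC size_scale ?polyC_eq0 ?c_neq0 // addrC size_XaddC. Qed.

Lemma lead_coef_midpoint p :
  lead_coef (midpoint_value c p) = (lead_coef p * c ^+ (size p).-1)%:P.
Proof.
rewrite lead_coef_comp ?midpoint_arg_size // size_map_polyC.
rewrite (lead_coef_map_inj polyC_inj (polyC0 _)).
by rewrite mul_polyC lead_coefZ addrC (eqP (monicXaddC _)) mulr1 polyCM rmorphXn.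
Qed.

Lemma size_divdiff3 p : (1 < size p)%N -> 1 - 2%:R * c ^+ (size p).-1 != 0 ->
  ((size p).-2 <= size (divdiff3 c p))%N.
Proof.
move=> p_gt1 nz_c; set d := (size p).-1.
pose P := 2%:R * (p^:P - 2%:R * midpoint_value c p + p%:P).
have EP : P = divdiff3 c p * ('X - 'X%:P) ^+ 2 := divdiff3E p.
have coefP : P`_d = (lead_coef p * (1 - c ^+ d *+ 2) *+ 2)%:P.
  have d_neq0 : (d == 0) = false by rewrite /d; case: (size p) p_gt1 => [|[|]].
  have mid_d : (midpoint_value c p)`_d = (lead_coef p * c ^+ d)%:P.
    by rewrite -lead_coef_midpoint lead_coefE size_comp_poly2 ?midpoint_arg_size ?size_map_polyC.
  rewrite /P !mulr_natl coefMn coefD coefB coefMn coefC coef_map d_neq0 mid_d addr0 /=.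
  by rewrite -polyCMn -polyCB -polyCMn mulrBr mulr1 mulrnAr.
have nzP : P`_d != 0.
  move: nz_c; rewrite mulr_natl => nz_c.
  rewrite coefP polyC_eq0 -mulr_natr !mulf_neq0 // ?lead_coef_eq0 -?size_poly_gt0 ?(ltnW p_gt1) //.
  by apply: contra_eq_neq c_half => ->; rewrite mulr0 eq_sym oner_neq0.
have nz3 : divdiff3 c p != 0 by apply: contra_neq nzP; rewrite EP => ->; rewrite mul0r coef0.
move: nzP; apply: contraR; rewrite -ltnNge => small.
rewrite nth_default // EP size_Mmonic ?monic_exp ?monicXsubC // size_exp_XsubC.
rewrite /d -!subn1 in small *; move: small; set s := size (divdiff3 c p); lia.
Qed.

End DividedDifferences.

Lemma rmorph_resultant_common_root (R S : comNzRingType) (f : {rmorphism R -> S})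
    (p q : {poly R}) (b : S) :
  (1 < size p)%N -> (1 < size q)%N ->
  (map_poly f p).[b] = 0 -> (map_poly f q).[b] = 0 -> f (resultant p q) = 0.
Proof.
move=> p_gt1 q_gt1 pb qb; have [[u v] _ /= res_uv] := resultant_in_ideal p_gt1 q_gt1.
have := congr1 (fun P => (map_poly f P).[b]) res_uv.
by rewrite /= map_polyC hornerC rmorphD !rmorphM /= hornerD !hornerM pb qb !mulr0 addr0.
Qed.

Section Specialization.
Variables (R S : idomainType) (phi : {rmorphism {poly R} -> S}) (p : {poly R}) (b : S).
Let a := phi 'X.
Let pf := map_poly phi p^:P.
Hypotheses (pf_a : pf.[a] = 0) (pf_b : pf.[b] = 0) (b_neq_a : b != a).

Let horner_map_const : (map_poly phi p%:P).[b] = pf.[a].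
Proof. by rewrite map_polyC hornerC horner_map [p^:P.['X]]comp_polyXr. Qed.

Let horner_map_XsubX : (map_poly phi ('X - 'X%:P)).[b] = b - a.
Proof. by rewrite map_polyXsubC hornerXsubC. Qed.

Lemma divdiff1_map_root : (map_poly phi (divdiff1 p)).[b] = 0.
Proof.
have := congr1 (fun P => (map_poly phi P).[b]) (divdiff1E p).
rewrite /= rmorphM rmorphB hornerM hornerD hornerN horner_map_const horner_map_XsubX.
rewrite pf_a pf_b subrr => /esym/eqP; rewrite mulf_eq0 subr_eq0 (negbTE b_neq_a) orbF.
by move/eqP.
Qed.

Variable c : R.
Hypotheses (c_half : c * 2%:R = 1) (pf_mid : pf.[phi c%:P * (a + b)] = 0).

Lemma divdiff3_map_root : (map_poly phi (divdiff3 c p)).[b] = 0.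
Proof.
have mid : (map_poly phi (midpoint_value c p)).[b] = pf.[phi c%:P * (a + b)].
  rewrite map_comp_poly horner_comp rmorphM rmorphD /= !map_polyC map_polyX.
  by rewrite hornerM hornerD !hornerC hornerX.
have : (map_poly phi (2%:R * (p^:P - 2%:R * midpoint_value c p + p%:P))).[b] = 0.
  rewrite !(rmorphM, rmorphD, rmorphB, rmorphN, rmorph_nat) !(hornerM, hornerD, hornerN, hornerC).
  by rewrite mid horner_map_const pf_a pf_b pf_mid !(mulr0, subr0, addr0).
rewrite divdiff3E // rmorphM rmorphXn hornerM horner_exp horner_map_XsubX => /eqP.
by rewrite mulf_eq0 expf_eq0 subr_eq0 (negbTE b_neq_a) andbF orbF => /eqP.
Qed.

End Specialization.

Lemma two_mul_half_exp_lt1 (F : numFieldType) m :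
  (1 < m)%N -> 2%:R * 2%:R^-1 ^+ m < 1 :> F.
Proof.
case: m => [|[|m]] // _; rewrite exprS mulrA mulfV ?pnatr_eq0 // mul1r.
by rewrite exprn_ilt1 ?invr_ge0 ?ler0n ?invf_lt1 ?ltr0n ?ltr1n.
Qed.

Lemma half_mpolyC_mul2 n : (2%:R^-1 : rat)%:MP_[n] * 2%:R = 1.
Proof. by rewrite -mpolyC_nat -mpolyCM mulVf ?pnatr_eq0. Qed.

Lemma one_sub_two_half_mpolyC_exp_neq0 n m : (1 < m)%N ->
  1 - 2%:R * (2%:R^-1 : rat)%:MP_[n] ^+ m != 0.
Proof.
move=> m_gt1; rewrite -rmorphXn -mpolyC_nat -mpolyCM -mpolyC1 -mpolyCB mpolyC_eq0.
by rewrite subr_eq0 eq_sym lt_eqF // two_mul_half_exp_lt1.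
Qed.

Lemma size_fpoly n : size (fpoly n) = n.+1.
Proof. by rewrite size_prod_XsubC [index_enum _]unlock -enumT size_enum_ord. Qed.

Definition reflect_subst n (i0 k j : 'I_n) : n.-tuple (Qr n) :=
  [tuple if i == j then 2%:R * 'X_k - 'X_i0 else 'X_i | i < n].

Lemma multiple_var_sub_reflect_subst n (i0 k j i : 'I_n) :
  multiple ('X_i0 - 2%:R * 'X_k + 'X_j) ('X_i - tnth (reflect_subst i0 k j) i).
Proof.
rewrite tnth_mktuple; case: eqP => [->|_]; last by rewrite subrr; apply: multiple0.
by exists 1; rewrite mulr1 opprB addrC.
Qed.

Section ReflectionSubstitution.
Variables (n : nat) (i0 k j : 'I_n).
Hypotheses (i0_neq_j : i0 != j) (i0_neq_k : i0 != k) (k_neq_j : k != j).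
Let t := reflect_subst i0 k j.
Let phi : {rmorphism {poly Qr n} -> Qr n} := comp_mpoly t \o horner_eval 'X_i0.
Let half := (2%:R^-1 : rat)%:MP_[n].

Let tnth_t i : tnth t i = if i == j then 2%:R * 'X_k - 'X_i0 else 'X_i.
Proof. exact: tnth_mktuple. Qed.

Let phiC a : phi a%:P = a \mPo t.
Proof. by rewrite /= /horner_eval hornerC. Qed.

Let phiX : phi 'X = tnth t i0.
Proof.
by rewrite /= /horner_eval hornerX comp_mpolyXU -tnth_nth !tnth_t (negbTE i0_neq_j).
Qed.

Let fpoly_subst_root i : (map_poly phi (fpoly n)^:P).[tnth t i] = 0.
Proof.
rewrite /fpoly !rmorph_prod horner_prod; apply/eqP/prodf_eq0; exists i => //.
by rewrite /= !map_polyXsubC phiC comp_mpolyXU -tnth_nth hornerXsubC subrr.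
Qed.

Let reflected_neq : tnth t j != tnth t i0.
Proof.
rewrite !tnth_t eqxx (negbTE i0_neq_j); apply/eqP.
move=> /(congr1 (meval (fun i => (i == k)%:R : rat))).
rewrite rmorphB rmorphM rmorph_nat /= !mevalXU eqxx (negbTE i0_neq_k).
by rewrite mulr1 subr0 => /eqP; rewrite pnatr_eq0.
Qed.

Let subst_midpoint : phi half%:P * (phi 'X + tnth t j) = tnth t k.
Proof.
rewrite phiC comp_mpolyC phiX !tnth_t eqxx (negbTE i0_neq_j) (negbTE k_neq_j).
by rewrite addrC subrK mulrA half_mpolyC_mul2 mul1r.
Qed.

Lemma Fres_reflect_subst : (3 <= n)%N -> (Fres n).['X_i0] \mPo t = 0.
Proof.
move=> n_ge3; have f_gt1 : (1 < size (fpoly n))%N by rewrite size_fpoly; lia.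
change (phi (resultant (divdiff1 (fpoly n)) (divdiff3 half (fpoly n))) = 0).
apply: (@rmorph_resultant_common_root _ _ _ _ _ (tnth t j)).
- by rewrite size_divdiff1 // size_fpoly; lia.
- have nz : 1 - 2%:R * half ^+ (size (fpoly n)).-1 != 0.
    by rewrite one_sub_two_half_mpolyC_exp_neq0 // size_fpoly; lia.
  apply: (@leq_trans _ _ _ _ (size_divdiff3 (half_mpolyC_mul2 n) f_gt1 nz)).
  by rewrite size_fpoly -subn1; lia.
- by apply: divdiff1_map_root; rewrite ?phiX ?fpoly_subst_root.
- apply: divdiff3_map_root; rewrite ?subst_midpoint ?phiX ?fpoly_subst_root //.
  exact: half_mpolyC_mul2.
Qed.

End ReflectionSubstitution.

Theorem lemma4 (n : nat) (hn : (3 <= n)%N) (k j : 'I_n)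
  (hk : (0 < k)%N) (hj : (0 < j)%N) (hkj : k != j) (i0 : 'I_n) (hi0 : val i0 = 0%N) :
  exists q : {mpoly rat[n]},
    (Fres n).['X_i0] = ('X_i0 - 2%:R * 'X_k + 'X_j) * q.
Proof.
have i0_neq_j : i0 != j by apply/eqP => E; move: hj; rewrite -E hi0.
have i0_neq_k : i0 != k by apply/eqP => E; move: hk; rewrite -E hi0.
have := multiple_sub_comp_mpoly (@multiple_var_sub_reflect_subst n i0 k j) ((Fres n).['X_i0]).
by rewrite Fres_reflect_subst // subr0.
Qed.
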